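(* Let $\phi$ be a feature map for mono-filtrations that is absolutely bounded and internally stable, let $R\subset\mathbb{R}^2$ be a bounded axis-aligned rectangle whose bottom-left corner is the origin, and let $\mathcal{X},\mathcal{Y}$ be two bi-filtrations of size $n$. Then $$\|\Phi_{\mathcal{X}}-\Phi_{\mathcal{Y}}\|_{L^2(\Delta^{(2)})}\le C\cdot n\cdot \mathrm{area}(R)\cdot d_{match}(\mathcal{X},\mathcal{Y})$$ for some constant $C$ (depending only on $\phi$).
   Context: Let $X$ be a finite abstract simplicial complex. For $p,q\in\mathbb{R}^2$ write $p\le q$ (resp. $p<q$) if both coordinates satisfy $\le$ (resp. $<$). A mono-filtration of $X$ assigns to each $\alpha\in\mathbb{R}$ a subcomplex $\mathcal{X}(\alpha)$, nested in $\alpha$; its size is the number of simplices of $X$. A bi-filtration $\mathcal{X}$ assigns to each $p\in\mathbb{R}^2$ a subcomplex $\mathcal{X}(p)$ with $\mathcal{X}(p)\subseteq\mathcal{X}(q)$ whenever $p\le q$. A point $p$ is critical for a simplex $\sigma$ if for every $\epsilon>0$, $\sigma\notin\mathcal{X}(p_1-\epsilon,p_2)$, $\sigma\notin\mathcal{X}(p_1,p_2-\epsilon)$, and $\sigma\in\mathcal{X}(p_1+\epsilon,p_2)\cap\mathcal{X}(p_1,p_2+\epsilon)$. Bi-filtrations are assumed tame (finitely many critical points); the size of $\mathcal{X}$ is the total number of critical points over all simplices. Let $\mathcal{L}$ be the set of non-vertical lines in $\mathbb{R}^2$ with positive slope. Each $\ell\in\mathcal{L}$ meets the line $x=-y$ in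 a unique point $b$ and is parametrized as $b+\lambda a$ with $a=(a_1,a_2)$ its unit direction vector with positive coordinates; $\hat{\ell}:=\min\{a_1,a_2\}$. The slice $\mathcal{X}_\ell$ is the mono-filtration $\alpha\mapsto\mathcal{X}(b+\alpha a)$ (of size at most the size of $\mathcal{X}$). For a mono-filtration, $D(\cdot)$ denotes its persistence diagram and $d_B$ the bottleneck distance between persistence diagrams (written $d_B(\mathcal{X},\mathcal{Y})$ for mono-filtrations). The matching distance of bi-filtrations is $d_{match}(\mathcal{X},\mathcal{Y}):=\sup_{\ell\in\mathcal{L}}\hat{\ell}\, d_B(\mathcal{X}_\ell,\mathcal{Y}_\ell)$. Let $\Delta^{(1)}:=\{(x_1,x_2):x_1<x_2\}$. A feature map $\phi$ assigns to each mono-filtration $\mathcal{X}$ a function $\phi_{\mathcal{X}}\in L^2(\Delta^{(1)})$. It is absolutely bounded if there is $v_1>0$ with $0\le \phi_{\mathcal{X}}(x)\le v_1 n$ for all mono-filtrations $\mathcal{X}$ of size $n$ and $x\in\Delta^{(1)}$; it is internally stable if there is $v_3>0$ with $|\phi_{\mathcal{X}}(x)-\phi_{\mathcal{Y}}(x)|\le v_3 n\, d_B(\mathcal{X},\mathcal{Y})$ for all mono-filtrations $\mathcal{X},\mathcal{Y}$ of size $n$ and $x\in\Delta^{(1)}$. Let $\Delta^{(2)}:=\{(p,q)\in\mathbb{R}^2\times\mathbb{R}^2: p<q\}\subset\mathbb{R}^4$ with Lebesgue measure. For $(p,q)\in\Delta^{(2)}$ let $\ell\in\mathcal{L}$ be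 the line through $p,q$ and $\lambda_p<\lambda_q$ the parameters with $p=b+\lambda_p a$, $q=b+\lambda_q a$; define $\Phi_{\mathcal{X}}(p,q):=\chi_R(p)\chi_R(q)\,\hat{\ell}\,\phi_{\mathcal{X}_\ell}(\lambda_p,\lambda_q)$, with $\chi_R$ the indicator of $R$. *)

From HB Require Import structures.
From mathcomp Require Import all_boot all_order all_algebra finmap.
From mathcomp Require Import all_classical all_reals all_analysis.
Set Implicit Arguments.
Unset Strict Implicit.
Unset Printing Implicit Defensive.
Import Order.TTheory GRing.Theory Num.Theory.
Local Open Scope ring_scope.
Local Open Scope classical_set_scope.


Definition le2 {R : realType} (p q : R * R) : Prop := p.1 <= q.1 /\ p.2 <= q.2.
Definition lt2 {R : realType} (p q : R * R) : Prop := p.1 < q.1 /\ p.2 < q.2.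

Definition simplex := {fset nat}.
Definition complex := {fset simplex}.

Definition is_complex (K : complex) : Prop :=
  (forall s, s \in K -> s != fset0) /\
  (forall s t : simplex, s \in K -> (t `<=` s)%fset -> t != fset0 -> t \in K).

(* Mono-filtrations.  A mono-filtration of K is alpha |-> K(alpha) with    *)
(* K(alpha) = {s in K | f s <= alpha} for a filter function f monotone on  *)
(* faces (so every K(alpha) is a subcomplex and they are nested).  Its size *)
(* is the number of simplices of K.                                        *)
Definition monofilt (R : realType) : Type := (complex * (simplex -> R))%type.

Definition is_monofilt {R : realType} (M : monofilt R) : Prop :=
  is_complex M.1 /\
  (forall s t : simplex, s \in M.1 -> t \in M.1 -> (t `<=` s)%fset -> M.2 t <= M.2 s).

Definition mf_size {R : realType} (M : monofilt R) : nat := #|` M.1|.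

(* Simplices of K are indexed by 'I_N, N = #|` K|; chains are row vectors  *)
(* 'rV[F]_N and the boundary is c |-> c *m bdry.                           *)
Section Homology.
Variables (F : fieldType) (R : realType) (M : monofilt R).

Definition sK : seq simplex := enum_fset M.1.
Definition NK : nat := size sK.
Definition simp (i : 'I_NK) : simplex := nth fset0 sK i.

(* coefficient of the face t in the boundary of s (oriented by the order  *)
(* of nat on vertices): (-1)^(position of the removed vertex)              *)
Definition bcoef (s t : simplex) : F :=
  if ((t `<=` s)%fset) && (#|` s| == (#|` t|).+1)
  then (-1) ^+ (\sum_(u <- enum_fset (s `\` t)%fset) count (fun w => w < u)%N (enum_fset t))
  else 0.

Definition bdry : 'M[F]_NK := \matrix_(i, j) bcoef (simp i) (simp j).

(* span of the k-simplices of K entering by time alpha *)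
Definition selk (k : nat) (alpha : R) : 'M[F]_NK :=
  diag_mx (\row_i ((#|` simp i| == k.+1) && (M.2 (simp i) <= alpha))%:R).

Definition cycles (k : nat) (alpha : R) : 'M[F]_NK :=
  (selk k alpha :&: kermx bdry)%MS.
Definition boundaries (k : nat) (alpha : R) : 'M[F]_NK :=
  (selk k.+1 alpha *m bdry)%MS.

(* rank of H_k(K(s)) -> H_k(K(t)) *)
Definition pbetti (k : nat) (s t : R) : nat :=
  (\rank (cycles k s) - \rank (cycles k s :&: boundaries k t)%MS)%N.

(* Persistence diagram in degree k: points (birth, death) with death in   *)
(* \bar R (death = +oo for essential classes), as a list with repetitions. *)
(* Multiplicities by the usual inclusion-exclusion formula over the       *)
(* sorted critical values c_1 < ... < c_r, with c_0 = -oo.                 *)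
Definition critv : seq R := sort <=%R (undup [seq M.2 s | s <- sK]).
Definition nc : nat := size critv.
Definition cv (i : nat) : R := nth 0 critv i.-1.   (* i in 1..nc *)
Definition betI (k i j : nat) : nat :=
  if i == 0%N then 0%N else pbetti k (cv i) (cv j).

Definition mult (k i j : nat) : nat :=
  if (i < j)%N then
    ((betI k i j.-1 + betI k i.-1 j) - (betI k i.-1 j.-1 + betI k i j))%N
  else 0%N.
Definition mult_inf (k i : nat) : nat := (betI k i nc - betI k i.-1 nc)%N.

Definition pdiagram (k : nat) : seq (R * \bar R) :=
  flatten [seq nseq (mult k i j) (cv i, (cv j)%:E) | i <- iota 1 nc, j <- iota 1 nc]
  ++ flatten [seq nseq (mult_inf k i) (cv i, +oo%E) | i <- iota 1 nc].

End Homology.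

(* Bottleneck distance (L^oo ground distance, unmatched points go to the  *)
(* diagonal at cost (death - birth)/2).                                    *)
Section Bottleneck.
Variable R : realType.
Local Open Scope ereal_scope.

Definition ddist (x y : \bar R) : \bar R :=
  match x, y with
  | EFin a, EFin b => (`|a - b|)%:E
  | +oo, +oo => 0
  | -oo, -oo => 0
  | _, _ => +oo
  end.

Definition ptdist (p q : R * \bar R) : \bar R :=
  maxe (`|p.1 - q.1|%R)%:E (ddist p.2 q.2).

Definition halfpers (p : R * \bar R) : \bar R := (p.2 - p.1%:E) * (2^-1)%:E.

Definition eps_matching (s t : seq (R * \bar R)) (eps : R) : Prop :=
  exists m : 'I_(size s) -> option 'I_(size t),
    [/\ (forall i i' j, m i = Some j -> m i' = Some j -> i = i'),
        (forall i j, m i = Some j ->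
           ptdist (nth (0%R, 0) s i) (nth (0%R, 0) t j) <= eps%:E),
        (forall i, m i = None -> halfpers (nth (0%R, 0) s i) <= eps%:E) &
        (forall j : 'I_(size t), (forall i, m i <> Some j) ->
           halfpers (nth (0%R, 0) t j) <= eps%:E)].

Definition bottleneck (s t : seq (R * \bar R)) : \bar R :=
  ereal_inf [set e%:E | e in [set e : R | (0 <= e)%R /\ eps_matching s t e]].

Definition dB (F : fieldType) (M1 M2 : monofilt R) : \bar R :=
  ereal_sup [set bottleneck (pdiagram F M1 k) (pdiagram F M2 k) | k in [set: nat]].

End Bottleneck.

Definition lebR2 {R : realType} :=
  ((@lebesgue_measure R) \x (@lebesgue_measure R))%E.

Definition Delta1 {R : realType} : set (R * R) := [set x | x.1 < x.2].

Definition featmap (R : realType) := monofilt R -> R * R -> R.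

Definition is_feature_map {R : realType} (phi : featmap R) : Prop :=
  forall M : monofilt R, is_monofilt M ->
    measurable_fun Delta1 (phi M) /\
    (\int[lebR2]_(x in Delta1) ((phi M x) ^+ 2)%:E < +oo)%E.

Definition abs_bounded {R : realType} (phi : featmap R) : Prop :=
  exists v1 : R, 0 < v1 /\
    forall (n : nat) (M : monofilt R), is_monofilt M -> mf_size M = n ->
      forall x, Delta1 x -> 0 <= phi M x <= v1 * n%:R.

Definition int_stable {R : realType} (F : fieldType) (phi : featmap R) : Prop :=
  exists v3 : R, 0 < v3 /\
    forall (n : nat) (M1 M2 : monofilt R), is_monofilt M1 -> is_monofilt M2 ->
      mf_size M1 = n -> mf_size M2 = n ->
      forall x, Delta1 x ->
        ((`|phi M1 x - phi M2 x|)%:E <= (v3 * n%:R)%:E * dB F M1 M2)%E.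

(* Bi-filtrations.  A (finitely presented) bi-filtration of K assigns to  *)
(* each simplex s a finite nonempty set of grades G s, and                 *)
(*   X(p) = {s in K | exists g in G s, g <= p};                           *)
Definition bifilt (R : realType) : Type := (complex * (simplex -> {fset (R * R)}))%type.

Definition bf_mem {R : realType} (X : bifilt R) (p : R * R) (s : simplex) : Prop :=
  s \in X.1 /\ exists2 g, g \in X.2 s & le2 g p.

Definition is_bifilt {R : realType} (X : bifilt R) : Prop :=
  is_complex X.1 /\
  (forall s, s \in X.1 -> X.2 s != fset0) /\
  (forall s t : simplex, s \in X.1 -> t \in X.1 -> (t `<=` s)%fset ->
     forall g, g \in X.2 s -> exists2 g', g' \in X.2 t & le2 g' g).

Definition critical {R : realType} (X : bifilt R) (s : simplex) (p : R * R) : Prop :=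
  forall eps : R, 0 < eps ->
    ~ bf_mem X (p.1 - eps, p.2) s /\ ~ bf_mem X (p.1, p.2 - eps) s /\
    bf_mem X (p.1 + eps, p.2) s /\ bf_mem X (p.1, p.2 + eps) s.

(* the critical points of s are among its grades *)
Definition bf_size {R : realType} (X : bifilt R) : nat :=
  \sum_(s <- enum_fset X.1)
     count (fun g => `[< critical X s g >]) (enum_fset (X.2 s)).

(* Lines of positive slope: ell = b + lambda a, b on x = -y, a a unit     *)
(* vector with positive coordinates; lhat = min(a1, a2).                   *)
Definition is_line {R : realType} (b a : R * R) : Prop :=
  b.1 = - b.2 /\ 0 < a.1 /\ 0 < a.2 /\ a.1 ^+ 2 + a.2 ^+ 2 = 1.

Definition lhat {R : realType} (a : R * R) : R := Num.min a.1 a.2.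

(* slice X_ell : alpha |-> X(b + alpha a), as a mono-filtration of X.1 *)
Definition slice {R : realType} (X : bifilt R) (b a : R * R) : monofilt R :=
  (X.1, fun s => inf [set alpha : R | bf_mem X (b.1 + alpha * a.1, b.2 + alpha * a.2) s]).

Definition dmatch {R : realType} (F : fieldType) (X Y : bifilt R) : \bar R :=
  ereal_sup [set ((lhat ba.2)%:E * dB F (slice X ba.1 ba.2) (slice Y ba.1 ba.2))%E
            | ba in [set ba : (R * R) * (R * R) | is_line ba.1 ba.2]].

Definition lebR4 {R : realType} := ((@lebR2 R) \x (@lebR2 R))%E.

Definition Delta2 {R : realType} : set ((R * R) * (R * R)) := [set z | lt2 z.1 z.2].

Definition rect {R : realType} (w h : R) : set (R * R) :=
  [set p | 0 <= p.1 <= w /\ 0 <= p.2 <= h].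

(* for p < q: unit direction a of the line through p, q; its base point  *)
(* b on x = -y; and parameters lambda_p < lambda_q with p = b + lambda_p a *)
Definition pq_dir {R : realType} (p q : R * R) : R * R :=
  let d := Num.sqrt ((q.1 - p.1) ^+ 2 + (q.2 - p.2) ^+ 2) in
  ((q.1 - p.1) / d, (q.2 - p.2) / d).
Definition pq_lam {R : realType} (p q : R * R) : R :=
  let a := pq_dir p q in (p.1 + p.2) / (a.1 + a.2).
Definition pq_base {R : realType} (p q : R * R) : R * R :=
  let a := pq_dir p q in let l := pq_lam p q in (p.1 - l * a.1, p.2 - l * a.2).
Definition pq_lamq {R : realType} (p q : R * R) : R :=
  pq_lam p q + Num.sqrt ((q.1 - p.1) ^+ 2 + (q.2 - p.2) ^+ 2).

Definition Phi {R : realType} (phi : featmap R) (w h : R) (X : bifilt R)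
  (z : (R * R) * (R * R)) : R :=
  let p := z.1 in let q := z.2 in
  (\1_(rect w h) p) * (\1_(rect w h) q) * lhat (pq_dir p q) *
  phi (slice X (pq_base p q) (pq_dir p q)) (pq_lam p q, pq_lamq p q).

Definition L2dist_Delta2 {R : realType} (f g : (R * R) * (R * R) -> R) : \bar R :=
  ((\int[lebR4]_(z in Delta2) ((f z - g z) ^+ 2)%:E) `^ (2^-1))%E.

From HB Require Import structures.
From mathcomp Require Import all_boot all_order all_algebra finmap.
From mathcomp Require Import all_classical all_reals all_analysis.
From mathcomp Require Import measurable_realfun lra.
Import Order.TTheory GRing.Theory Num.Theory.
Local Open Scope ring_scope.
Local Open Scope classical_set_scope.

(* For p < q the line l through p and q has positive slope, and the slices
   X_l, Y_l are mono-filtrations of the common complex, of size m <= n since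
   every simplex has a critical grade (one minimising g.1 + g.2).  Internal
   stability bounds |Phi_X - Phi_Y|(p, q) by
   1_{RxR}(p, q) v3 n lhat(l) d_B(X_l, Y_l) <= 1_{RxR}(p, q) v3 n d_match(X, Y),
   and integrating its square over R x R, of measure area(R)^2, gives the claim
   with C = v3. *)

Lemma fset_argmin {T : choiceType} {d} {O : orderType d} {A : {fset T}}
  (f : T -> O) :
  A != fset0 -> exists2 x, x \in A & forall y, y \in A -> (f x <= f y)%O.
Proof.
case/fset0Pn => x0 x0A.
have [x _ xmin] := @arg_minP _ O A [` x0A]%fset xpredT (fun x => f (val x)) isT.
by exists (val x) => [|y yA]; [exact: valP | exact: (xmin [` yA]%fset)].
Qed.

Section SquareIntegral.
Local Open Scope ereal_scope.
Context d (T : measurableType d) (R : realType).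
Variable mu : {measure set T -> \bar R}.

Lemma ge0_le_integralT (f g : T -> \bar R) :
  (forall z, 0 <= f z) -> (forall z, f z <= g z) ->
  \int[mu]_z f z <= \int[mu]_z g z.
Proof.
move=> f0 fg; have g0 z : 0 <= g z := le_trans (f0 z) (fg z).
rewrite !ge0_integralTE //; apply: ereal_sup_le => _ [u uf <-].
by exists u => // z; exact: le_trans (uf z) (fg z).
Qed.

Lemma sqrt_integral_sqr_le_indic {D A : set T} {f : T -> R} {c k : R} :
  measurable A -> (0 <= c)%R -> (0 <= k)%R -> mu A = (k ^+ 2)%:E ->
  (forall z, D z -> `|f z| <= \1_A z * c)%R ->
  (\int[mu]_(z in D) (f z ^+ 2)%:E) `^ 2^-1 <= (c * k)%:E.
Proof.
move=> mA c0 k0 muA fle.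
have sqr_le z : ((fun z => (f z ^+ 2)%:E) \_ D) z <= (c ^+ 2)%:E * (\1_A z)%:E.
  rewrite /patch; case: ifP => [/[!inE] Dz|_]; last first.
    by rewrite mule_ge0 // lee_fin ?sqr_ge0.
  have := fle z Dz; rewrite -EFinM lee_fin indicE.
  case: (z \in A) => /=; rewrite ?mul1r ?mulr1 ?mul0r ?mulr0 => fz.
    by rewrite -real_normK ?num_real // lerXn2r ?nnegrE.
  by move: fz; rewrite normr_le0 => /eqP ->; rewrite expr0n.
have int_le : \int[mu]_(z in D) (f z ^+ 2)%:E <= ((c * k) ^+ 2)%:E.
  rewrite integral_mkcond.
  apply: (@le_trans _ _ (\int[mu]_z ((c ^+ 2)%:E * (\1_A z)%:E))).
    apply: ge0_le_integralT sqr_le => z.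
    by rewrite /patch; case: ifP; rewrite // lee_fin sqr_ge0.
  rewrite ge0_integralZl //.
  - by rewrite integral_indic // setIT muA -EFinM exprMn.
  - exact/measurable_EFinP/measurable_indic.
  - by rewrite lee_fin sqr_ge0.
apply: le_trans (gt0_ler_poweR _ _ _ int_le) _ => //.
- by rewrite in_itv /= leey integral_ge0 // => z _; rewrite lee_fin sqr_ge0.
- by rewrite in_itv /= leey lee_fin sqr_ge0.
by rewrite poweR_EFin powR12_sqrt ?sqr_ge0 // sqrtr_sqr ger0_norm ?mulr_ge0.
Qed.

Lemma sqrt_integral_sqr_lee_indic {D A : set T} {f : T -> R} {c : \bar R} {k : R} :
  measurable A -> 0 <= c -> (0 <= k)%R -> mu A = (k ^+ 2)%:E ->
  (D `&` A !=set0 -> (0 < k)%R) ->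
  (forall z, D z -> (`|f z|)%:E <= (\1_A z)%:E * c) ->
  (\int[mu]_(z in D) (f z ^+ 2)%:E) `^ 2^-1 <= c * k%:E.
Proof.
(* [D `&` A !=set0 -> 0 < k] rules out [c = +oo] with [k = 0], where
   [c * k%:E = 0] although [f] need not vanish on [D `&` A]. *)
move=> mA + k_ge0 muA DA_k; case: c => [c||//] c_ge0 fle.
  by rewrite -EFinM; apply: (sqrt_integral_sqr_le_indic mA) => // z /fle; rewrite -EFinM.
have [k_gt0|k_le0] := ltrP 0%R k; first by rewrite gt0_mulye ?lte_fin // leey.
have f0 z : D z -> (`|f z| <= \1_A z * 0)%R.
  move=> Dz; have := fle z Dz; rewrite indicE mulr0 -lee_fin.
  case: (boolP (z \in A)) => [/[!inE] Az|_]; last by rewrite mul0e.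
  by have := DA_k (ex_intro _ z (conj Dz Az)); rewrite ltNge k_le0.
have k0 : k = 0%R by apply/eqP; rewrite eq_le k_le0.
apply: le_trans (sqrt_integral_sqr_le_indic mA _ _ muA f0) _ => //.
by rewrite k0 !mul0r mule0.
Qed.

End SquareIntegral.

Lemma bifilt_critical_grade {R : realType} {X : bifilt R} {s : simplex} :
  is_bifilt X -> s \in X.1 -> exists2 g, g \in X.2 s & critical X s g.
Proof.
move=> [_ [grades_neq0 _]] sX.
have [g gs gmin] := fset_argmin (fun g : R * R => g.1 + g.2) (grades_neq0 s sX).
exists g => // eps eps_gt0; split; [|split; [|split]].
- by move=> [_ [g' /(gmin g') /= ? [/= ? ?]]]; lra.
- by move=> [_ [g' /(gmin g') /= ? [/= ? ?]]]; lra.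
- by split=> //; exists g => //; split => /=; lra.
- by split=> //; exists g => //; split => /=; lra.
Qed.

Lemma card_le_bf_size (R : realType) (X : bifilt R) :
  is_bifilt X -> (#|` X.1| <= bf_size X)%N.
Proof.
move=> HX; rewrite /bf_size -sum1_size big_seq [leqRHS]big_seq.
apply: leq_sum => s sX; have [g gs gcrit] := bifilt_critical_grade HX sX.
by rewrite -has_count; apply/hasP; exists g => //; exact/asboolP.
Qed.

Section Slice.
Context {R : realType} {X : bifilt R} (b : R * R) {a : R * R}.
Hypotheses (X_bifilt : is_bifilt X) (a1_gt0 : 0 < a.1) (a2_gt0 : 0 < a.2).

Let entry s := [set alpha : R | bf_mem X (b.1 + alpha * a.1, b.2 + alpha * a.2) s].

Let entry_neq0 {s} : s \in X.1 -> entry s !=set0.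
Proof.
move=> sX; have [_ [grades_neq0 _]] := X_bifilt.
have /fset0Pn [g gs] := grades_neq0 s sX.
exists (Num.max ((g.1 - b.1) / a.1) ((g.2 - b.2) / a.2)); split => //.
exists g => //; split => /=; rewrite addrC -lerBlDr -ler_pdivrMr //.
- by rewrite le_max lexx.
- by rewrite le_max lexx orbT.
Qed.

Let entry_lbound {s} : s \in X.1 -> has_lbound (entry s).
Proof.
move=> sX; have [_ [grades_neq0 _]] := X_bifilt.
have [g0 _ g0min] := fset_argmin (fun g : R * R => (g.1 - b.1) / a.1) (grades_neq0 s sX).
exists ((g0.1 - b.1) / a.1) => alpha [_ [g /(g0min g) /= gmin [/= le1 _]]].
by apply: le_trans gmin _; rewrite ler_pdivrMr // lerBlDl.
Qed.

Let entry_face {s t} : s \in X.1 -> t \in X.1 -> (t `<=` s)%fset ->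
  entry s `<=` entry t.
Proof.
move=> sX tX ts alpha [_ [g gs [le1 le2]]]; have [_ [_ face_grade]] := X_bifilt.
have [g' g't [le1' le2']] := face_grade s t sX tX ts g gs.
split=> //; exists g' => //.
by split; [exact: le_trans le1' le1 | exact: le_trans le2' le2].
Qed.

Lemma slice_monofilt : is_monofilt (slice X b a).
Proof.
split=> [|s t sX tX ts /=]; first by case: X_bifilt.
apply: lb_le_inf; first exact: entry_neq0.
by move=> alpha /(entry_face sX tX ts); exact: (ge_inf (entry_lbound tX)).
Qed.

End Slice.

Section LineThroughPoints.
Context {R : realType} {p q : R * R}.
Hypothesis p_lt_q : lt2 p q.

Let d := Num.sqrt ((q.1 - p.1) ^+ 2 + (q.2 - p.2) ^+ 2).

Let d_gt0 : 0 < d.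
Proof.
case: p_lt_q => lt1 lt2; rewrite sqrtr_gt0 ltr_wpDr ?sqr_ge0 //.
by rewrite exprn_gt0 // subr_gt0.
Qed.

Lemma pq_line : is_line (pq_base p q) (pq_dir p q).
Proof.
case: p_lt_q => lt1 lt2; rewrite /is_line /pq_base /pq_lam /pq_dir -/d /=.
set a1 := (q.1 - p.1) / d; set a2 := (q.2 - p.2) / d.
have a1_gt0 : 0 < a1 by rewrite divr_gt0 // subr_gt0.
have a2_gt0 : 0 < a2 by rewrite divr_gt0 // subr_gt0.
split; last split=> //; last split=> //.
  have a12_neq0 : a1 + a2 != 0 by rewrite gt_eqF // addr_gt0.
  apply/eqP; rewrite -subr_eq0 opprK addrACA -opprD -mulrDr divfK //.
  by rewrite subrr.
have d_sqr : d ^+ 2 = (q.1 - p.1) ^+ 2 + (q.2 - p.2) ^+ 2.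
  by rewrite sqr_sqrtr // addr_ge0 // sqr_ge0.
by rewrite !expr_div_n -mulrDl -d_sqr divff // gt_eqF // exprn_gt0.
Qed.

Lemma pq_lam_lt : Delta1 (pq_lam p q, pq_lamq p q).
Proof. by rewrite /Delta1 /pq_lamq /= -/d ltrDl. Qed.

End LineThroughPoints.

Lemma lhat_gt0 {R : realType} {b a : R * R} : is_line b a -> 0 < lhat a.
Proof. by case=> _ [a1_gt0 [a2_gt0 _]]; rewrite lt_min a1_gt0. Qed.

Lemma dB_ge0 (R : realType) (F : fieldType) (M1 M2 : monofilt R) :
  (0 <= dB F M1 M2)%E.
Proof.
apply: le_trans (ereal_sup_ubound _); last by exists 0%N.
by apply: le_ereal_inf_tmp => _ [e [e_ge0 _] <-]; rewrite lee_fin.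
Qed.

Lemma dmatch_ge0 (R : realType) (F : fieldType) (X Y : bifilt R) :
  (0 <= dmatch F X Y)%E.
Proof.
have diag : lt2 (0 : R, 0 : R) (1, 1) by split; exact: ltr01.
apply: le_trans (ereal_sup_ubound _); last first.
  by exists (pq_base (0, 0) (1, 1), pq_dir (0, 0) (1, 1)); first exact: pq_line.
by rewrite mule_ge0 ?dB_ge0 // lee_fin ltW // (lhat_gt0 (pq_line diag)).
Qed.

Lemma lebR2_sigma_finite (R : realType) : sigma_finite setT (@lebR2 R).
Proof.
have /sigma_finiteP[F [TF ndF Foo]] := sigma_finiteT (@lebesgue_measure R).
exists (fun n => F n `*` F n).
  rewrite -setXTT TF predeqE => -[x y]; split.
    move=> [/= [n _ Fnx] [k _ Fky]]; exists (maxn n k) => //; split.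
    - by move: x Fnx; exact/subsetPset/ndF/leq_maxl.
    - by move: y Fky; exact/subsetPset/ndF/leq_maxr.
  by move=> [n _ []/= ? ?]; split; exists n.
move=> k; have [? ?] := Foo k; split; first exact: measurableX.
by rewrite /lebR2 product_measure1E// lte_mul_pinfty// ge0_fin_numE.
Qed.

(* [lebR4] is a measure only because [lebR2] is sigma-finite, which is not
   inferred for products of sigma-finite measures. *)
HB.instance Definition _ (R : realType) := Measure.on (@lebR2 R).
HB.instance Definition _ (R : realType) :=
  Measure_isSigmaFinite.Build _ _ _ (@lebR2 R) (@lebR2_sigma_finite R).
HB.instance Definition _ (R : realType) := Measure.on (@lebR4 R).

Section Rectangle.
Variables (R : realType) (w h : R).

Let rectE : rect w h = `[0, w] `*` `[0, h].
Proof. by apply/seteqP; split => -[x y] /=; rewrite !in_itv. Qed.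

Lemma rect_measurable : measurable (rect w h).
Proof. by rewrite rectE; exact: measurableX. Qed.

Let lebesgue_measure_itv0 (x : R) : 0 <= x -> lebesgue_measure `[0, x] = x%:E.
Proof.
move=> x_ge0; rewrite lebesgue_measure_itv /= lte_fin.
by case: ltP => [_|x_le0]; [rewrite sube0 | congr (_%:E); lra].
Qed.

Lemma lebR4_rect_rect : 0 <= w -> 0 <= h ->
  lebR4 (rect w h `*` rect w h) = ((w * h) ^+ 2)%:E.
Proof.
move=> w_ge0 h_ge0.
have lebR2_rect : lebR2 (rect w h) = (w * h)%:E.
  rewrite rectE /lebR2 product_measure1E // EFinM.
  by congr (_ * _)%E; exact: lebesgue_measure_itv0.
have rect_meas := rect_measurable.
by rewrite /lebR4 product_measure1E // expr2 EFinM -lebR2_rect.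
Qed.

Lemma Delta2_rect_area_gt0 :
  Delta2 `&` (rect w h `*` rect w h) !=set0 -> 0 < w * h.
Proof.
case=> -[[p1 p2] [q1 q2]] [[/= ? ?]].
move=> [[/= /andP[? ?] /andP[? ?]] [/= /andP[? ?] /andP[? ?]]].
by apply: mulr_gt0; lra.
Qed.

End Rectangle.

Section Stability.
Context {R : realType} {F : fieldType} {phi : featmap R} {v3 : R}.
Hypothesis v3_gt0 : 0 < v3.
Hypothesis phi_stable : forall {n : nat} {M1 M2 : monofilt R},
  is_monofilt M1 -> is_monofilt M2 -> mf_size M1 = n -> mf_size M2 = n ->
  forall x, Delta1 x -> ((`|phi M1 x - phi M2 x|)%:E <= (v3 * n%:R)%:E * dB F M1 M2)%E.

Let sliced (X : bifilt R) (z : (R * R) * (R * R)) :=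
  phi (slice X (pq_base z.1 z.2) (pq_dir z.1 z.2)) (pq_lam z.1 z.2, pq_lamq z.1 z.2).

Lemma Phi_sub_normE w h X Y z : Delta2 z ->
  `|Phi phi w h X z - Phi phi w h Y z| =
  \1_(rect w h `*` rect w h) z * (lhat (pq_dir z.1 z.2) * `|sliced X z - sliced Y z|).
Proof.
move=> /pq_line/lhat_gt0 lhat_gt0.
rewrite /Phi !indicE in_setX -mulrBr normrM.
case: (_ \in _); case: (_ \in _); rewrite ?mul1r ?mul0r ?normr0 ?mul0r //.
by rewrite ger0_norm ?ltW.
Qed.

Lemma Phi_sub_le_dmatch w h {X Y z} :
  is_bifilt X -> is_bifilt Y -> X.1 = Y.1 -> Delta2 z ->
  ((`|Phi phi w h X z - Phi phi w h Y z|)%:E <=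
   (\1_(rect w h `*` rect w h) z)%:E * ((v3 * (#|` X.1|)%:R)%:E * dmatch F X Y))%E.
Proof.
move=> X_bifilt Y_bifilt XY Dz; rewrite Phi_sub_normE // EFinM.
apply: lee_wpmul2l; first by rewrite lee_fin indicE.
set b := pq_base z.1 z.2; set a := pq_dir z.1 z.2.
have line : is_line b a := pq_line Dz; have [_ [a1_gt0 [a2_gt0 _]]] := line.
have sX := slice_monofilt b X_bifilt a1_gt0 a2_gt0.
have sY := slice_monofilt b Y_bifilt a1_gt0 a2_gt0.
have sizeY : mf_size (slice Y b a) = #|` X.1| by rewrite /mf_size /= XY.
have := phi_stable sX sY erefl sizeY _ (pq_lam_lt Dz).
have lhat_ge0 : (0 <= (lhat a)%:E)%E by rewrite lee_fin ltW // (lhat_gt0 line).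
move=> /(lee_wpmul2l lhat_ge0)/le_trans; rewrite EFinM; apply.
rewrite muleCA; apply: lee_wpmul2l; first by rewrite lee_fin mulr_ge0 // ltW.
by apply: ereal_sup_ubound; exists (b, a).
Qed.
End Stability.

Theorem theorem2 (R : realType) (F : fieldType) (phi : featmap R) :
  is_feature_map phi -> abs_bounded phi -> int_stable F phi ->
  exists C : R, forall (w h : R) (X Y : bifilt R) (n : nat),
    0 <= w -> 0 <= h ->
    is_bifilt X -> is_bifilt Y -> X.1 = Y.1 ->
    bf_size X = n -> bf_size Y = n ->
    (L2dist_Delta2 (Phi phi w h X) (Phi phi w h Y)
       <= (C * n%:R * (w * h))%:E * dmatch F X Y)%E.
Proof.
move=> _ _ [v3 [v3_gt0 phi_stable]].
exists v3 => w h X Y n w_ge0 h_ge0 X_bifilt Y_bifilt XY X_size _.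
have card_le_n : (#|` X.1| <= n)%N by rewrite -X_size card_le_bf_size.
rewrite EFinM muleAC /L2dist_Delta2.
apply: (@sqrt_integral_sqr_lee_indic _ _ _ lebR4 Delta2 (rect w h `*` rect w h)).
- by apply: measurableX; exact: rect_measurable.
- by rewrite mule_ge0 ?dmatch_ge0 // lee_fin mulr_ge0 // ltW.
- exact: mulr_ge0.
- exact: lebR4_rect_rect.
- exact: Delta2_rect_area_gt0.
move=> z Dz.
apply: le_trans (Phi_sub_le_dmatch v3_gt0 phi_stable w h X_bifilt Y_bifilt XY Dz) _.
apply: lee_wpmul2l; first by rewrite lee_fin indicE.
apply: lee_wpmul2r; first exact: dmatch_ge0.
by rewrite lee_fin ler_pM2l // ler_nat.
Qed.
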